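(* For each $r\in\{0,1,2,3,4,5\}$, the recession cone $C^r=\{x\in\mathbb R^6:\ \sigma\tilde c\cdot x\ge 0 \text{ for all } \tilde c\in\mathcal C_r,\ \sigma\in\mathfrak S_3\}$ of the polyhedron $Q^r$ is the cone generated by the five rays $[1,0,1,0,0,0]$, $[1,0,0,1,1,0]$, $[0,1,1,0,0,1]$, $[0,1,0,0,1,0]$, $[0,0,0,1,0,1]$ (which are the transition-count vectors of the loops $121$, $1231$, $1321$, $131$, $232$ respectively); in particular $C^0=C^1=\dots=C^5$.
   Context: Vectors of $\mathbb R^6$ are indexed by ordered pairs $ij$ of distinct elements of $\{1,2,3\}$ in the order $[x_{12},x_{13},x_{21},x_{23},x_{31},x_{32}]$; $\mathfrak S_3$ acts by $(\sigma c)_{ij}=c_{\sigma(i)\sigma(j)}$. Consider the following pairs $(\tilde c,a)$: $A_1=([1,0,0,0,0,0],0)$, $A_2=([1,1,-1,0,-1,0],-1)$, $B_{\mathrm{odd}}=([1,1,-1,-1,1,1],0)$, $B_{\mathrm{even}}=([3,1,-1,-1,-1,1],-1)$, $D_1=([2,-1,-1,-1,2,2],0)$, $D_2=([2,-1,-1,-1,2,2],-1)$, $D_3=([5,2,-4,-1,-1,2],-2)$, $D_0=([5,2,-4,-1,-1,2],-2)$. For $T=6k+r$ with $r\in\{0,\dots,5\}$, the applicable pairs are $A_1,A_2$; $B_{\mathrm{odd}}$ if $T$ is odd and $B_{\mathrm{even}}$ if $T$ is even; and $D_1$ if $T\equiv1 \pmod 3$, $D_2$ if $T\equiv 2\pmod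 3$, $D_3$ if $T\equiv 3\pmod 6$, $D_0$ if $T\equiv 0\pmod 6$ (this depends only on $r$). Let $\mathcal C_r$ be the set of the four vectors $\tilde c$ of the applicable pairs, and let $Q^r=\{x\in\mathbb R^6: \sigma\tilde c\cdot x\ge a \text{ for every applicable pair }(\tilde c,a)\text{ and every }\sigma\in\mathfrak S_3\}$. Writing $Q^r$ as a Minkowski sum $Q^r=P^r+C^r$ of a polytope and a cone, $C^r$ is the recession cone of $Q^r$, which equals the set displayed in the claim. *)

From HB Require Import structures.
From mathcomp Require Import all_boot all_order all_algebra all_fingroup.
Set Implicit Arguments. Unset Strict Implicit. Unset Printing Implicit Defensive.
Import Order.TTheory GRing.Theory Num.Theory.
Local Open Scope ring_scope.

(* Coordinates of R^6 are indexed by ordered pairs ij of distinct elements of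
   {1,2,3}, in the order [x12,x13,x21,x23,x31,x32].  We use 0-based labels:
   element 1,2,3 of {1,2,3} is 0,1,2 : 'I_3, and position k : 'I_6. *)
Definition pair_of (k : nat) : nat * nat :=
  match k with
  | 0 => (0, 1) | 1 => (0, 2) | 2 => (1, 0)
  | 3 => (1, 2) | 4 => (2, 0) | _ => (2, 1)
  end%N.

Definition index_of (i j : nat) : nat :=
  match i, j with
  | 0, 1 => 0 | 0, 2 => 1 | 1, 0 => 2
  | 1, 2 => 3 | 2, 0 => 4 | _, _ => 5
  end%N.

(* The action of S_3:  (sigma c)_{ij} = c_{sigma(i) sigma(j)}. *)
Definition act (s : 'S_3) (c : seq int) (k : 'I_6) : int :=
  nth 0 c (index_of (val (s (inord (pair_of k).1)))
                    (val (s (inord (pair_of k).2)))).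

Definition dot {R : realFieldType} (c : 'I_6 -> int) (x : 'I_6 -> R) : R :=
  \sum_(k < 6) (c k)%:~R * x k.

Definition A1   : seq int * int := ([:: 1; 0; 0; 0; 0; 0], 0).
Definition A2   : seq int * int := ([:: 1; 1; -1; 0; -1; 0], -1).
Definition Bodd : seq int * int := ([:: 1; 1; -1; -1; 1; 1], 0).
Definition Beven: seq int * int := ([:: 3; 1; -1; -1; -1; 1], -1).
Definition D1   : seq int * int := ([:: 2; -1; -1; -1; 2; 2], 0).
Definition D2   : seq int * int := ([:: 2; -1; -1; -1; 2; 2], -1).
Definition D3   : seq int * int := ([:: 5; 2; -4; -1; -1; 2], -2).
Definition D0   : seq int * int := ([:: 5; 2; -4; -1; -1; 2], -2).

(* Applicable pairs for T = 6k + r, r in {0,...,5} (depends only on r). *)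
Definition applicable (r : nat) : seq (seq int * int) :=
  [:: A1; A2;
      (if odd r then Bodd else Beven);
      (if (r %% 3 == 1)%N then D1
       else if (r %% 3 == 2)%N then D2
       else if (r == 3)%N then D3
       else D0)].

Definition Cvecs (r : nat) : seq (seq int) := map fst (applicable r).

Definition Ccone {R : realFieldType} (r : nat) (x : 'I_6 -> R) : Prop :=
  forall c, c \in Cvecs r -> forall s : 'S_3, 0 <= dot (act s c) x.

(* The five rays (transition-count vectors of loops 121, 1231, 1321, 131, 232). *)
Definition rays : seq (seq int) :=
  [:: [:: 1; 0; 1; 0; 0; 0];
      [:: 1; 0; 0; 1; 1; 0];
      [:: 0; 1; 1; 0; 0; 1];
      [:: 0; 1; 0; 0; 1; 0];
      [:: 0; 0; 0; 1; 0; 1]].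

Definition in_ray_cone {R : realFieldType} (x : 'I_6 -> R) : Prop :=
  exists l : 'I_5 -> R, (forall i, 0 <= l i) /\
    forall k : 'I_6, x k = \sum_(i < 5) l i * (nth 0 (nth [::] rays i) k)%:~R.

From Pilot Require Import Defs.
From HB Require Import structures.
From mathcomp Require Import all_boot all_order all_algebra all_fingroup.
From mathcomp Require Import ring lra.
Import Order.TTheory GRing.Theory Num.Theory.
Local Open Scope ring_scope.

(* C^r is the cone of nonnegative circulations on the complete digraph on
   {1,2,3}.  The S_3-images of A1 give x >= 0 and those of A2 say that at every
   vertex the outflow dominates the inflow; summing over the vertices forces
   equality.  Conversely every inequality defining C^r, for any r, is a linear
   consequence of nonnegativity and flow conservation.  Finally a nonnegative
   circulation on three vertices splits into the three 2-cycles plus one of the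
   two 3-cycles, chosen by the sign of x12 - x21. *)

Local Notation o6 i := (@Ordinal 6 i isT).
Local Notation o5 i := (@Ordinal 5 i isT).

(* Flow conservation at vertices 1 and 2 (that at vertex 3 follows), in the
   coordinates [x12, x13, x21, x23, x31, x32]. *)
Definition circulation {R : realFieldType} (x : 'I_6 -> R) : Prop :=
  (forall k, 0 <= x k) /\
  x (o6 0) + x (o6 1) = x (o6 2) + x (o6 4) /\
  x (o6 2) + x (o6 3) = x (o6 0) + x (o6 5).

Lemma sum_ord6 (V : nmodType) (F : 'I_6 -> V) :
  \sum_(k < 6) F k = F (o6 0) + F (o6 1) + F (o6 2) + F (o6 3) + F (o6 4) + F (o6 5).
Proof.
by rewrite !big_ord_recl big_ord0 addr0 !addrA; do !congr (_ + _); congr F; apply/val_inj.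
Qed.

Lemma sum_ord5 (V : nmodType) (F : 'I_5 -> V) :
  \sum_(i < 5) F i = F (o5 0) + F (o5 1) + F (o5 2) + F (o5 3) + F (o5 4).
Proof.
by rewrite !big_ord_recl big_ord0 addr0 !addrA; do !congr (_ + _); congr F; apply/val_inj.
Qed.

Definition triple_fun (p : nat * nat * nat) (i : nat) : nat :=
  match i with 0 => p.1.1 | 1 => p.1.2 | _ => p.2 end%N.

Definition act_triple (p : nat * nat * nat) (c : seq int) (k : 'I_6) : int :=
  nth 0 c (index_of (triple_fun p (pair_of k).1) (triple_fun p (pair_of k).2)).

Definition perm_triple (s : 'S_3) : nat * nat * nat :=
  (val (s (inord 0)), val (s (inord 1)), val (s (inord 2))).

Definition triples3 : seq (nat * nat * nat) :=
  [:: (0, 1, 2); (0, 2, 1); (1, 0, 2); (1, 2, 0); (2, 0, 1); (2, 1, 0)]%N.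

Lemma act_perm_triple (s : 'S_3) (c : seq int) :
  Defs.act s c =1 act_triple (perm_triple s) c.
Proof. by case=> [[|[|[|[|[|[|?]]]]]] ?]. Qed.

Lemma mem_perm_triple (s : 'S_3) : perm_triple s \in triples3.
Proof.
have neq i j : (i < 3)%N -> (j < 3)%N -> i != j -> val (s (inord i)) != val (s (inord j)).
  move=> hi hj; apply: contra; rewrite val_eqE (inj_eq perm_inj) -val_eqE /=.
  by rewrite !inordK.
move: (neq 0 1 isT isT isT) (neq 0 2 isT isT isT) (neq 1 2 isT isT isT)%N.
rewrite /perm_triple.
case: (s (inord 0)) => [[|[|[|?]]] ?] //; case: (s (inord 1)) => [[|[|[|?]]] ?] //;
by case: (s (inord 2)) => [[|[|[|?]]] ?].
Qed.

Lemma exists_perm_triple (p : nat * nat * nat) :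
  p \in triples3 -> exists s : 'S_3, perm_triple s = p.
Proof.
move=> hp; have f_inj : injective (fun i : 'I_3 => inord (triple_fun p i) : 'I_3).
  move=> i j /(congr1 val); move: hp; rewrite !inE => /or3P[| |/or4P[| | |]] /eqP ->;
  by case: i j => [[|[|[|?]]] ?] [[|[|[|?]]] ?]; rewrite //= !inordK // => e; apply/val_inj.
exists (perm f_inj); rewrite /perm_triple !permE.
by move: hp; rewrite !inE => /or3P[| |/or4P[| | |]] /eqP ->; rewrite /= !inordK.
Qed.

Lemma Ccone_triplesE (R : realFieldType) (r : nat) (x : 'I_6 -> R) :
  Ccone r x <->
  all (fun c => all (fun p => 0 <= dot (act_triple p c) x) triples3) (Cvecs r).
Proof.
have dot_perm s c : dot (Defs.act s c) x = dot (act_triple (perm_triple s) c) x.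
  by apply: eq_bigr => k _; rewrite act_perm_triple.
split=> [C | /allP C c hc s].
  apply/allP => c hc; apply/allP => p /exists_perm_triple[s <-].
  by rewrite -dot_perm C.
by rewrite dot_perm (allP (C c hc)) ?mem_perm_triple.
Qed.

Lemma Ccone_circulation (R : realFieldType) (r : nat) (x : 'I_6 -> R) :
  Ccone r x -> circulation x.
Proof.
move/Ccone_triplesE; rewrite /= => /and5P[+ + _ _ _].
rewrite /dot !sum_ord6 /act_triple /= !andbT.
move=> /and5P[a1 a2 a3 a4 /andP[a5 a6]] /and5P[b1 b2 b3 b4 /andP[b5 b6]].
split; last by split; lra.
by case=> [[|[|[|[|[|[|//]]]]]] hk]; rewrite (bool_irrelevance hk isT); lra.
Qed.

Lemma circulation_Ccone (R : realFieldType) (r : nat) (x : 'I_6 -> R) :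
  (r < 6)%N -> circulation x -> Ccone r x.
Proof.
move=> hr [nn [e1 e2]]; apply/Ccone_triplesE.
move: (nn (o6 0)) (nn (o6 1)) (nn (o6 2)) (nn (o6 3)) (nn (o6 4)) (nn (o6 5)) => *.
case: r hr => [|[|[|[|[|[|//]]]]]] _;
  rewrite /= /dot !sum_ord6 /act_triple /= !andbT; do !(apply/andP; split); lra.
Qed.

Lemma in_ray_cone_circulation (R : realFieldType) (x : 'I_6 -> R) :
  in_ray_cone x -> circulation x.
Proof.
move=> [l [l_ge0 ray_sum]]; split=> [k|]; rewrite ?ray_sum.
  apply: sumr_ge0 => i _; rewrite mulr_ge0 // ler0z.
  by case: i k => [[|[|[|[|[|//]]]]] ?] [[|[|[|[|[|[|//]]]]]] ?].
by rewrite !sum_ord5 /=; split; ring.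
Qed.

(* If x21 <= x12, the loops 121, 1231, 131, 232 carry x21, x12 - x21, x13, x32;
   otherwise 121, 1321, 131, 232 carry x12, x21 - x12, x31, x23. *)
Lemma circulation_in_ray_cone (R : realFieldType) (x : 'I_6 -> R) :
  circulation x -> in_ray_cone x.
Proof.
move=> [nn [e1 e2]].
move: (nn (o6 0)) (nn (o6 1)) (nn (o6 2)) (nn (o6 3)) (nn (o6 4)) (nn (o6 5)) => *.
have [le21_12 | lt12_21] := lerP (x (o6 2)) (x (o6 0)).
  exists (fun i => nth 0 [:: x (o6 2); x (o6 0) - x (o6 2); 0; x (o6 1); x (o6 5)] i).
  split; first by case=> [[|[|[|[|[|//]]]]]] ? /=; lra.
  by case=> [[|[|[|[|[|[|//]]]]]] hk]; rewrite sum_ord5 /= (bool_irrelevance hk isT); lra.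
exists (fun i => nth 0 [:: x (o6 0); 0; x (o6 2) - x (o6 0); x (o6 4); x (o6 3)] i).
split; first by case=> [[|[|[|[|[|//]]]]]] ? /=; lra.
by case=> [[|[|[|[|[|[|//]]]]]] hk]; rewrite sum_ord5 /= (bool_irrelevance hk isT); lra.
Qed.

Theorem proposition13 (R : realFieldType) (r : nat) :
  (r < 6)%N -> forall x : 'I_6 -> R, Ccone r x <-> in_ray_cone x.
Proof.
move=> hr x; split=> [/Ccone_circulation | /in_ray_cone_circulation].
  exact: circulation_in_ray_cone.
exact: circulation_Ccone.
Qed.
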